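(* Let $n\ge1$, $\boldsymbol\mu\in\mathcal S_n^\cup$, $\boldsymbol\xi\in\mathbb R^n$, $\mathbf y=\boldsymbol\mu+\boldsymbol\xi$, $\hat{\boldsymbol\mu}=\Pi_{\mathcal S_n^\cup}(\mathbf y)$, and let $(\hat T_1,\dots,\hat T_{\hat q})$, $\hat q=q(\hat{\boldsymbol\mu})$, be a partition of $\{1,\dots,n\}$ into sets of consecutive integers such that $\hat{\boldsymbol\mu}$ is affine on each $\hat T_j$. Then $$\|\hat{\boldsymbol\mu}-\boldsymbol\mu\|_2^2\le\sum_{j=1}^{\hat q}\big\|\Pi_{\mathcal S^\cap_{|\hat T_j|}}(\boldsymbol\xi_{\hat T_j})\big\|_2^2 .$$
   Context: For $m\ge3$, $\mathcal S_m^\cup=\{\mathbf u\in\mathbb R^m:2u_i\le u_{i+1}+u_{i-1},\ i=2,\dots,m-1\}$; $\mathcal S_1^\cup=\mathbb R$, $\mathcal S_2^\cup=\mathbb R^2$; $\mathcal S_m^\cap=-\mathcal S_m^\cup$ (concave sequences). $\Pi_K$ is Euclidean projection onto $K$. For $\mathbf u\in\mathcal S_n^\cup$, $q(\mathbf u)$ is one plus the number of strict inequalities $2u_i<u_{i+1}+u_{i-1}$, i.e. the number of affine pieces. For $T=\{t_1<\dots<t_{|T|}\}$, $\boldsymbol\xi_T=(\xi_{t_1},\dots,\xi_{t_{|T|}})^T$. *)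

(* Vectors of R^m are represented as sequences of length m
   (0-based indices). *)
From HB Require Import structures.
From mathcomp Require Import all_boot all_order all_algebra.
Set Implicit Arguments. Unset Strict Implicit. Unset Printing Implicit Defensive.
Import Order.TTheory GRing.Theory Num.Theory.
Local Open Scope ring_scope.

Section Defs.
Variable R : realFieldType.

(* u in S^cup_m (m = size u): 2 u_i <= u_{i+1} + u_{i-1} at interior indices.
   For m <= 2 this is vacuous, i.e. S^cup_1 = R, S^cup_2 = R^2. *)
Definition convex_seq (u : seq R) : Prop :=
  forall i : nat, (0 < i)%N -> (i.+1 < size u)%N ->
    2 * u`_i <= u`_i.+1 + u`_i.-1.

Definition concave_seq (u : seq R) : Prop := convex_seq (map -%R u).

Definition sqnorm (u : seq R) : R := \sum_(i < size u) u`_i ^+ 2.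
Definition sqdist (u v : seq R) : R := \sum_(i < size u) (u`_i - v`_i) ^+ 2.

Definition vadd (u v : seq R) : seq R := [seq u`_i + v`_i | i <- iota 0 (size u)].

(* p = Pi_K(y): p is the Euclidean projection of y onto the set K of vectors
   of the same length as y (the minimizer, which exists and is unique for
   the closed convex cones considered here). *)
Definition is_proj (K : seq R -> Prop) (y p : seq R) : Prop :=
  size p = size y /\ K p /\
  forall v : seq R, size v = size y -> K v -> sqdist y p <= sqdist y v.

Definition qpieces (u : seq R) : nat :=
  addn 1 (count (fun i : nat => 2 * u`_i < u`_i.+1 + u`_i.-1)
             (iota 1 (size u - 2)%N)).

Definition affine_on (u : seq R) (T : pred nat) : Prop :=
  exists a b : R, forall t : nat, T t -> u`_t = a * t%:R + b.

End Defs.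

(* Partition of {0,..,n-1} into consecutive blocks given by block sizes s:
   block j is the interval [blk_start s j, blk_start s j + s_j). *)
Definition blk_start (s : seq nat) (j : nat) : nat := sumn (take j s).
Definition blk (s : seq nat) (j : nat) : pred nat :=
  fun t => (blk_start s j <= t < blk_start s j + nth 0%N s j)%N.
Definition subvec {R : Type} (s : seq nat) (j : nat) (xi : seq R) : seq R :=
  take (nth 0%N s j) (drop (blk_start s j) xi).

From HB Require Import structures.
From mathcomp Require Import all_boot all_order all_algebra.
From mathcomp Require Import ring lra zify.
Set Implicit Arguments. Unset Strict Implicit. Unset Printing Implicit Defensive.
Import Order.TTheory GRing.Theory Num.Theory.
Local Open Scope ring_scope.

(* Since mu lies in the convex cone S^cup, the variational inequality of the
   projection gives |muhat - mu|^2 <= <xi, muhat - mu>.  On a block T_j the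
   vector muhat is affine and mu is convex, so w_j = (muhat - mu)_{T_j} is
   concave; as S^cap is a convex cone, p_j + t w_j stays in it, whence
   <xi_{T_j}, w_j> <= <p_j, w_j> <= (|p_j|^2 + |w_j|^2) / 2 for the
   projection p_j of xi_{T_j}.  Summing over the blocks yields
   |muhat - mu|^2 <= (sum_j |p_j|^2 + |muhat - mu|^2) / 2. *)

Section Projection.
Variable R : realFieldType.

Lemma le0_of_quadratic_perturbation (a b : R) : 0 <= b ->
  (forall t : R, 0 < t -> t <= 1 -> 2 * t * a <= t ^+ 2 * b) -> a <= 0.
Proof.
move=> b0 Hab; rewrite leNgt; apply/negP => a0.
have ab0 : 0 < a + b by lra.
pose t := a / (a + b).
have t0 : 0 < t by rewrite divr_gt0.
have t1 : t <= 1 by rewrite ler_pdivrMr // mul1r; lra.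
have tab : t * (a + b) = a by rewrite divfK // gt_eqF.
have tb : t ^+ 2 * b = t * a - t ^+ 2 * a.
  have tb1 : t * b = a - t * a by rewrite -{1}tab; ring.
  by rewrite expr2 -mulrA tb1; ring.
have := Hab t t0 t1; rewrite tb.
have : 0 < t ^+ 2 * a by rewrite mulr_gt0 // exprn_gt0.
have : 0 < t * a by rewrite mulr_gt0.
lra.
Qed.

Lemma sqdist_shift (x p : seq R) (d : nat -> R) (t : R) :
  sqdist x (mkseq (fun k => p`_k + t * d k) (size x)) =
  sqdist x p - 2 * t * (\sum_(k < size x) (x`_k - p`_k) * d k)
   + t ^+ 2 * (\sum_(k < size x) d k ^+ 2).
Proof.
rewrite /sqdist !mulr_sumr -sumrB -big_split /=.
by apply: eq_bigr => k _; rewrite nth_mkseq //; ring.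
Qed.

Lemma is_proj_variational (K : seq R -> Prop) (x p : seq R) (d : nat -> R) :
  is_proj K x p ->
  (forall t : R, 0 < t -> t <= 1 -> K (mkseq (fun k => p`_k + t * d k) (size x))) ->
  \sum_(k < size x) (x`_k - p`_k) * d k <= 0.
Proof.
move=> [_ [_ p_min]] Kpd.
apply: (@le0_of_quadratic_perturbation _ (\sum_(k < size x) d k ^+ 2)).
  by apply: sumr_ge0 => k _; exact: sqr_ge0.
move=> t t0 t1; have := p_min _ (size_mkseq _ _) (Kpd t t0 t1).
rewrite sqdist_shift; lra.
Qed.

Lemma convex_seq_conic (a b : R) (u v : seq R) (m : nat) :
  0 <= a -> 0 <= b -> (m <= size u)%N -> (m <= size v)%N ->
  convex_seq u -> convex_seq v ->
  convex_seq (mkseq (fun k => a * u`_k + b * v`_k) m).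
Proof.
move=> a0 b0 mu mv cu cv i i0; rewrite size_mkseq => im.
rewrite !nth_mkseq; try lia.
have := ler_wpM2l a0 (cu i i0 (leq_trans im mu)).
have := ler_wpM2l b0 (cv i i0 (leq_trans im mv)).
lra.
Qed.

Lemma nth_oppr_seq (u : seq R) (k : nat) : (map -%R u)`_k = - u`_k.
Proof.
case: (ltnP k (size u)) => [ltku | leuk]; first by rewrite (nth_map 0).
by rewrite !nth_default ?size_map ?oppr0.
Qed.

Lemma concave_seq_conic (a b : R) (u v : seq R) (m : nat) :
  0 <= a -> 0 <= b -> (m <= size u)%N -> (m <= size v)%N ->
  concave_seq u -> concave_seq v ->
  concave_seq (mkseq (fun k => a * u`_k + b * v`_k) m).
Proof.
move=> a0 b0 mu mv cu cv; rewrite /concave_seq /mkseq -map_comp.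
have := convex_seq_conic (m := m) a0 b0 _ _ cu cv; rewrite !size_map => /(_ mu mv).
congr convex_seq; apply: eq_map => k /=; rewrite !nth_oppr_seq; ring.
Qed.

Lemma two_inner_le_sqnorm (p w : seq R) : size w = size p ->
  2 * \sum_(k < size p) p`_k * w`_k <= sqnorm p + sqnorm w.
Proof.
move=> swp; rewrite /sqnorm swp mulr_sumr -big_split; apply: ler_sum => k _.
rewrite -subr_ge0.
have -> : p`_k ^+ 2 + w`_k ^+ 2 - 2 * (p`_k * w`_k) = (p`_k - w`_k) ^+ 2 by ring.
exact: sqr_ge0.
Qed.

Lemma inner_le_concave_proj (x p w : seq R) :
  size w = size x -> is_proj (@concave_seq R) x p -> concave_seq w ->
  \sum_(k < size x) x`_k * w`_k <= (sqnorm p + sqnorm w) / 2.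
Proof.
move=> swx projp cw; have [sp [cp _]] := projp.
have var : \sum_(k < size x) (x`_k - p`_k) * w`_k <= 0.
  apply: is_proj_variational projp _ => t t0 _.
  have := concave_seq_conic ler01 (ltW t0) _ _ cp cw.
  rewrite sp swx => /(_ _ (leqnn _) (leqnn _)).
  by rewrite (eq_mkseq (g := fun k => p`_k + t * w`_k)) // => k; rewrite mul1r.
have := two_inner_le_sqnorm (etrans swx (esym sp)); rewrite sp.
have -> : \sum_(k < size x) x`_k * w`_k =
    \sum_(k < size x) (x`_k - p`_k) * w`_k + \sum_(k < size x) p`_k * w`_k.
  by rewrite -big_split; apply: eq_bigr => k _ /=; ring.
lra.
Qed.

Lemma concave_window_affine_sub (u v : seq R) (B m : nat) :
  (B + m <= size v)%N -> convex_seq v ->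
  affine_on u (fun t => B <= t < B + m)%N ->
  concave_seq (mkseq (fun k => u`_(B + k) - v`_(B + k)) m).
Proof.
move=> Bmv cv [a [b affu]] [|i] // _; rewrite size_map size_mkseq => im.
rewrite !(nth_map (0 : R)) ?size_mkseq ?nth_mkseq /=; [|lia..].
have := cv (B + i.+1)%N (ltn_addl _ (ltn0Sn i)) ltac:(lia).
have -> : (B + i.+1).+1 = (B + i.+2)%N by lia.
have -> : (B + i.+1).-1 = (B + i)%N by lia.
have u_affine k : (k < m)%N -> u`_(B + k) = a * (B + k)%:R + b.
  by move=> km; apply: affu; lia.
rewrite !u_affine; [|lia..].
rewrite !natrD !mulrS; lra.
Qed.

End Projection.

Lemma blk_end_le (s : seq nat) (j : nat) : (j < size s)%N ->
  (blk_start s j + nth 0%N s j <= sumn s)%N.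
Proof.
rewrite /blk_start; elim: s j => [|x s IH] [|j] //=; first by rewrite add0n leq_addr.
by move=> /IH; rewrite -addnA leq_add2l.
Qed.

Lemma sum_blocks (R : realFieldType) (s : seq nat) (g : nat -> R) :
  \sum_(k < sumn s) g k =
  \sum_(j < size s) \sum_(k < nth 0%N s j) g (blk_start s j + k)%N.
Proof.
rewrite /blk_start; elim: s g => [|x s IH] g /=; first by rewrite !big_ord0.
rewrite big_split_ord big_ord_recl /= (IH (fun k => g (x + k)%N)).
congr (_ + _); apply: eq_bigr => j _; apply: eq_bigr => k _.
by rewrite addnA.
Qed.

Section Blocks.
Variables (R : realFieldType) (mu xi muhat : seq R) (s : seq nat).
Hypotheses (size_mu : size mu = sumn s) (size_xi : size xi = sumn s).
Hypothesis convex_mu : convex_seq mu.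
Hypothesis affine_muhat : forall j, (j < size s)%N -> affine_on muhat (blk s j).

Lemma sqdist_le_inner : is_proj (@convex_seq R) (vadd mu xi) muhat ->
  sqdist muhat mu <= \sum_(k < sumn s) xi`_k * (muhat`_k - mu`_k).
Proof.
move=> projy; have [smh [cmh _]] := projy.
have sy : size (vadd mu xi) = sumn s by rewrite size_map size_iota.
have nth_y k : (k < sumn s)%N -> (vadd mu xi)`_k = mu`_k + xi`_k.
  by move=> ks; rewrite (nth_map 0%N) ?size_iota ?size_mu // nth_iota ?size_mu.
have var : \sum_(k < sumn s) ((vadd mu xi)`_k - muhat`_k) * (mu`_k - muhat`_k) <= 0.
  rewrite -sy; apply: (is_proj_variational (d := fun k => mu`_k - muhat`_k) projy).
  move=> t t0 t1.
  have := convex_seq_conic (m := sumn s) (a := 1 - t) _ (ltW t0) _ _ cmh convex_mu.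
  rewrite subr_ge0 smh sy size_mu => /(_ t1 (leqnn _) (leqnn _)).
  by congr convex_seq; apply: eq_mkseq => k; ring.
rewrite /sqdist smh sy.
suff -> : \sum_(k < sumn s) (muhat`_k - mu`_k) ^+ 2 =
    \sum_(k < sumn s) xi`_k * (muhat`_k - mu`_k) +
    \sum_(k < sumn s) ((vadd mu xi)`_k - muhat`_k) * (mu`_k - muhat`_k) by lra.
by rewrite -big_split; apply: eq_bigr => k _ /=; rewrite nth_y //; ring.
Qed.

Lemma block_inner_le (ps : seq (seq R)) (j : nat) : (j < size s)%N ->
  is_proj (@concave_seq R) (subvec s j xi) (nth [::] ps j) ->
  \sum_(k < nth 0%N s j) xi`_(blk_start s j + k) *
      (muhat`_(blk_start s j + k) - mu`_(blk_start s j + k))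
  <= (sqnorm (nth [::] ps j) + \sum_(k < nth 0%N s j)
        (muhat`_(blk_start s j + k) - mu`_(blk_start s j + k)) ^+ 2) / 2.
Proof.
move=> js projj; have Bm := blk_end_le js.
set B := blk_start s j in Bm *; set m := nth 0%N s j in Bm *.
have sx : size (subvec s j xi) = m by rewrite size_takel // size_drop size_xi; lia.
pose w := mkseq (fun k => muhat`_(B + k) - mu`_(B + k)) m.
have cw : concave_seq w.
  by apply: concave_window_affine_sub; [rewrite size_mu | | exact: affine_muhat].
have sw : size w = size (subvec s j xi) by rewrite size_mkseq sx.
have := inner_le_concave_proj sw projj cw; rewrite sx /sqnorm size_mkseq.
have -> : \sum_(k < m) (subvec s j xi)`_k * w`_k =
    \sum_(k < m) xi`_(B + k) * (muhat`_(B + k) - mu`_(B + k)).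
  by apply: eq_bigr => k _; rewrite nth_take // nth_drop nth_mkseq.
have -> // : \sum_(k < m) w`_k ^+ 2 = \sum_(k < m) (muhat`_(B + k) - mu`_(B + k)) ^+ 2.
by apply: eq_bigr => k _; rewrite nth_mkseq.
Qed.

End Blocks.

Theorem mainTheorem8 (R : realFieldType) (n : nat) (mu xi muhat : seq R)
  (s : seq nat) (ps : seq (seq R)) :
  (1 <= n)%N ->
  size mu = n -> size xi = n ->
  convex_seq mu ->
  is_proj (@convex_seq R) (vadd mu xi) muhat ->
  (* (T_1,...,T_qhat): partition of {0..n-1} into consecutive blocks *)
  all (fun k => 0 < k)%N s -> sumn s = n ->
  size s = qpieces muhat ->
  (forall j, (j < size s)%N -> affine_on muhat (blk s j)) ->
  (* ps_j = Pi_{S^cap_{|T_j|}} (xi_{T_j}) *)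
  size ps = size s ->
  (forall j, (j < size s)%N -> is_proj (@concave_seq R) (subvec s j xi) (nth [::] ps j)) ->
  sqdist muhat mu <= \sum_(j < size s) sqnorm (nth [::] ps j).
Proof.
move=> _ smu sxi cmu projy _ sums _ aff _ projs.
rewrite -{}sums in smu sxi.
have := sqdist_le_inner smu cmu projy.
have dist_blocks : sqdist muhat mu = \sum_(j < size s) \sum_(k < nth 0%N s j)
    (muhat`_(blk_start s j + k) - mu`_(blk_start s j + k)) ^+ 2.
  case: projy => [smh _]; rewrite /sqdist smh size_map size_iota smu.
  exact: (sum_blocks _ (fun k => (muhat`_k - mu`_k) ^+ 2)).
rewrite (sum_blocks _ (fun k => xi`_k * (muhat`_k - mu`_k))).
have : \sum_(j < size s) \sum_(k < nth 0%N s j) xi`_(blk_start s j + k) *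
      (muhat`_(blk_start s j + k) - mu`_(blk_start s j + k))
  <= (\sum_(j < size s) sqnorm (nth [::] ps j) + sqdist muhat mu) / 2.
  rewrite dist_blocks -big_split /= mulr_suml; apply: ler_sum => j _.
  exact (block_inner_le smu sxi cmu aff (ltn_ord j) (projs j (ltn_ord j))).
lra.
Qed.
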